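(* Let $\varepsilon\in(0,1)$ be irrational and let $b,M$ be integers with $b\ge1$ and $2b\le M$. Then the number of distinct $b$-amicable pairs $(w^{(1)},w^{(2)})$ with $w^{(1)},w^{(2)}\in\mathcal{L}_M(\varepsilon)$ is at most $M-b$.
   Context: For irrational $\varepsilon\in(0,1)$, let $T_\varepsilon:[0,1)\to[0,1)$, $T_\varepsilon(x)=x+1-\varepsilon$ on $[0,\varepsilon)$ and $x-\varepsilon$ on $[\varepsilon,1)$; the coding $u_{\varepsilon,x_0}\in\{0,1\}^{\mathbb{Z}}$ has $u_n=0$ if $T^n_\varepsilon(x_0)\in[0,\varepsilon)$ and $1$ otherwise. $\mathcal{L}_M(\varepsilon)$ is the set of length-$M$ factors of $u_{\varepsilon,x_0}$ (independent of $x_0$). 3iet words: for irrational $\varepsilon\in(0,1)$ and $\max\{\varepsilon,1-\varepsilon\}<\ell<1$, let $T_{\varepsilon,\ell}$ on $[0,\ell)$ be $x\mapsto x+1-\varepsilon$ on $I_A=[0,\ell-1+\varepsilon)$, $x\mapsto x+1-2\varepsilon$ on $I_B=[\ell-1+\varepsilon,\varepsilon)$, $x\mapsto x-\varepsilon$ on $I_C=[\varepsilon,\ell)$; the word $u_{\varepsilon,\ell,x_0}\in\{A,B,C\}^{\mathbb{Z}}$ has $u_n=X$ iff $T^n_{\varepsilon,\ell}(x_0)\in I_X$. A 3iet factor is a finite factor of some such word. Morphisms $\sigma_{01},\sigma_{10}:\{A,B,C\}^*\to\{0,1\}^*$: $\sigma_{01}(A)=0,\sigma_{01}(B)=01,\sigma_{01}(C)=1$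 and $\sigma_{10}(A)=0,\sigma_{10}(B)=10,\sigma_{10}(C)=1$. Two words $w^{(1)},w^{(2)}\in\{0,1\}^*$ form a $b$-amicable pair if there is a 3iet factor $w$ with exactly $b$ letters $B$ such that $w^{(1)}=\sigma_{01}(w)$ and $w^{(2)}=\sigma_{10}(w)$. *)

From Stdlib Require Import Reals Lra Lia ZArith Arith List.
Import ListNotations.
Open Scope R_scope.

Definition irrational (x : R) : Prop :=
  ~ exists p q : Z, q <> 0%Z /\ x = IZR p / IZR q.

Definition iterZ (f g : R -> R) (n : Z) (x : R) : R :=
  match n with
  | Z0 => x
  | Zpos p => Nat.iter (Pos.to_nat p) f x
  | Zneg p => Nat.iter (Pos.to_nat p) g x
  end.

Definition T2 (eps x : R) : R :=
  if Rlt_dec x eps then x + 1 - eps else x - eps.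
Definition T2inv (eps y : R) : R :=
  if Rlt_dec y (1 - eps) then y + eps else y - 1 + eps.

(* binary letters: false = 0, true = 1 *)
Definition coding2 (eps x0 : R) (n : Z) : bool :=
  if Rlt_dec (iterZ (T2 eps) (T2inv eps) n x0) eps then false else true.

Definition LangM (M : nat) (eps : R) (w : list bool) : Prop :=
  length w = M /\
  exists x0, 0 <= x0 < 1 /\
    exists n : Z, forall i : nat, (i < M)%nat ->
      nth i w false = coding2 eps x0 (n + Z.of_nat i)%Z.

Inductive ABC := LA | LB | LC.

Definition T3 (eps l x : R) : R :=
  if Rlt_dec x (l - 1 + eps) then x + 1 - eps
  else if Rlt_dec x eps then x + 1 - 2 * eps
  else x - eps.
Definition T3inv (eps l y : R) : R :=
  if Rlt_dec y (l - eps) then y + eps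
  else if Rlt_dec y (1 - eps) then y - 1 + 2 * eps
  else y - 1 + eps.

Definition coding3 (eps l x0 : R) (n : Z) : ABC :=
  let y := iterZ (T3 eps l) (T3inv eps l) n x0 in
  if Rlt_dec y (l - 1 + eps) then LA
  else if Rlt_dec y eps then LB
  else LC.

Definition iet3_factor (w : list ABC) : Prop :=
  exists eps l x0 : R,
    irrational eps /\ 0 < eps < 1 /\ Rmax eps (1 - eps) < l < 1 /\
    0 <= x0 < l /\
    exists n : Z, forall i : nat, (i < length w)%nat ->
      nth i w LA = coding3 eps l x0 (n + Z.of_nat i)%Z.

Definition isB (x : ABC) : bool := match x with LB => true | _ => false end.
Definition countB (w : list ABC) : nat := length (filter isB w).

Definition sigma01 (x : ABC) : list bool :=
  match x with LA => [false] | LB => [false; true] | LC => [true] end.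
Definition sigma10 (x : ABC) : list bool :=
  match x with LA => [false] | LB => [true; false] | LC => [true] end.

Definition amicable (b : nat) (w1 w2 : list bool) : Prop :=
  exists w : list ABC, iet3_factor w /\ countB w = b /\
    w1 = flat_map sigma01 w /\ w2 = flat_map sigma10 w.

From Stdlib Require Import Reals ZArith List Lra Lia.

(* On [0,1) the map T_eps is the rotation x |-> {x - eps}, so a factor of
   length M is the coding of the orbit of a point y, and its i-th letter is
   determined by the position of y relative to {i eps} and {(i+1) eps}.  Hence
   the factor only depends on the rank of y, the number of points {k eps},
   0 <= k <= M, lying at or below y (rank_determines_word).

   For an amicable pair coded by y1 and y2, the letters of sigma01 w and
   sigma10 w disagree exactly on the images of the letters B, as 01 versus 10.
   Comparing with the parity form of the letters (letter_parity) shows that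
   y1 <= y2, that exactly b of the points {k eps} separate them, and that
   {M eps} is not one of them (amicable_rank_gap).  So a pair is determined by
   the rank r of y1, which lies in 1..M+1-b and avoids the window below the rank
   of {M eps}; at most M-b values remain. *)

Open Scope nat_scope.

Fixpoint count_lt (f : nat -> bool) (n : nat) : nat :=
  match n with
  | 0 => 0
  | S n => count_lt f n + (if f n then 1 else 0)
  end.

Lemma count_lt_le f n : count_lt f n <= n.
Proof. induction n as [|n IH]; simpl; [lia|]. destruct (f n); lia. Qed.

Lemma count_lt_succ_l f n :
  count_lt f (S n) = (if f 0 then 1 else 0) + count_lt (fun k => f (S k)) n.
Proof. induction n as [|n IH]; simpl in *; lia. Qed.

Lemma count_lt_mono f g n :
  (forall k, k < n -> f k = true -> g k = true) -> count_lt f n <= count_lt g n.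
Proof.
  induction n as [|n IH]; intros Hfg; simpl; [lia|].
  assert (IHn := IH (fun k Hk => Hfg k ltac:(lia))).
  specialize (Hfg n ltac:(lia)). destruct (f n), (g n); try lia; discriminate (Hfg eq_refl).
Qed.

Lemma count_lt_pos_of f n k : k < n -> f k = true -> 1 <= count_lt f n.
Proof.
  induction n as [|n IH]; intros Hk Hf; simpl; [lia|].
  destruct (Nat.eq_dec k n) as [->|Hne]; [rewrite Hf; lia|].
  specialize (IH ltac:(lia) Hf). lia.
Qed.

Lemma count_lt_pos f n : 1 <= count_lt f n -> exists k, k < n /\ f k = true.
Proof.
  induction n as [|n IH]; simpl; intros H; [lia|].
  destruct (f n) eqn:Efn; [exists n; split; auto|].
  destruct (IH ltac:(lia)) as [k [Hk Hf]]. exists k; split; auto.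
Qed.

Lemma count_lt_split f g n :
  (forall k, k < n -> f k = true -> g k = true) ->
  count_lt g n = count_lt f n + count_lt (fun k => xorb (f k) (g k)) n.
Proof.
  induction n as [|n IH]; intros Hfg; simpl; [lia|].
  rewrite (IH (fun k Hk => Hfg k ltac:(lia))).
  specialize (Hfg n ltac:(lia)). destruct (f n), (g n); simpl; try lia; discriminate (Hfg eq_refl).
Qed.

Lemma count_lt_eq f g n :
  (forall k, k < n -> f k = true -> g k = true) -> count_lt f n = count_lt g n ->
  forall k, k < n -> f k = g k.
Proof.
  intros Hfg Hc k Hk. rewrite (count_lt_split f g n Hfg) in Hc.
  destruct (f k) eqn:Ef, (g k) eqn:Eg; auto.
  - specialize (Hfg k Hk Ef). congruence.
  - assert (1 <= count_lt (fun k => xorb (f k) (g k)) n); [|lia].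
    apply (count_lt_pos_of _ _ k Hk). now rewrite Ef, Eg.
Qed.

Lemma relational_pigeonhole {X} (Q : X -> nat -> Prop) (qs : list X) :
  NoDup qs ->
  (forall p p' r, In p qs -> In p' qs -> Q p r -> Q p' r -> p = p') ->
  forall R, (forall p, In p qs -> exists r, In r R /\ Q p r) -> length qs <= length R.
Proof.
  induction qs as [|p ps IH]; intros ND Hinj R HR; simpl; [lia|].
  inversion ND as [|? ? Hnin ND']; subst.
  destruct (HR p (or_introl eq_refl)) as [r [Hr Qr]].
  assert (length ps <= length (remove Nat.eq_dec r R)).
  { apply IH; auto.
    - intros a a' r' Ha Ha'. apply Hinj; right; auto.
    - intros a Ha. destruct (HR a (or_intror Ha)) as [r' [Hr' Qr']].
      exists r'. split; auto. apply in_in_remove; auto. intros ->.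
      assert (a = p) by (apply (Hinj a p r); auto; [right | left]; auto).
      subst; contradiction. }
  pose proof (remove_length_lt Nat.eq_dec R r Hr). lia.
Qed.

(* Combinatorics of the two morphisms: sigma01 w and sigma10 w agree except on
   the images of the letters B, where they read 01 and 10.  Hence any D with
   D 0 = false whose increments D i xor D (i+1) mark these disagreements is the
   indicator of "strictly inside a B": it vanishes at both ends, is true
   exactly countB w times, and each true value D (p+1) sits just after a
   position p with D p = false where sigma01 w reads 0. *)
Lemma sigma_disagreement_marks (w : list ABC) (D : nat -> bool) :
  let u := flat_map sigma01 w in let v := flat_map sigma10 w in
  D 0 = false ->
  (forall i, i < length u ->
     xorb (nth i u false) (nth i v false) = xorb (D i) (D (S i))) ->
  D (length u) = false /\ count_lt D (S (length u)) = countB w /\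
  (forall p, p < length u -> D (S p) = true -> D p = false /\ nth p u false = false).
Proof.
  revert D. induction w as [|a w IH]; intros D u v D0 Hxor.
  - subst u. simpl. rewrite D0. repeat split; intros; simpl in *; lia.
  - subst u v. destruct a; cbn [flat_map sigma01 sigma10 app length] in Hxor |- *.
    1,3: (* the letters A and C: one common letter, no disagreement *)
      assert (D1 : D 1 = false)
        by (specialize (Hxor 0 ltac:(lia)); simpl in Hxor; rewrite D0 in Hxor;
            destruct (D 1); auto);
      destruct (IH (fun k => D (S k)) D1) as [Hend [Hcount Hmark]];
        [intros i Hi; exact (Hxor (S i) ltac:(lia))|];
      split; [exact Hend|]; split;
        [rewrite count_lt_succ_l, D0; exact Hcount|];
      intros [|p] Hp HD; [congruence|exact (Hmark p ltac:(lia) HD)].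
    (* the letter B: sigma01 reads 01, sigma10 reads 10 *)
    assert (D1 : D 1 = true)
      by (specialize (Hxor 0 ltac:(lia)); simpl in Hxor; rewrite D0 in Hxor;
          destruct (D 1); auto).
    assert (D2 : D 2 = false)
      by (specialize (Hxor 1 ltac:(lia)); simpl in Hxor; rewrite D1 in Hxor;
          destruct (D 2); auto).
    destruct (IH (fun k => D (S (S k))) D2) as [Hend [Hcount Hmark]].
    { intros i Hi. exact (Hxor (S (S i)) ltac:(lia)). }
    split; [exact Hend|]. split.
    + rewrite count_lt_succ_l, D0, count_lt_succ_l. cbv beta.
      rewrite D1, Hcount. reflexivity.
    + intros [|[|p]] Hp HD; [auto|congruence|exact (Hmark p ltac:(lia) HD)].
Qed.

Open Scope R_scope.

Lemma frac_part_unique x a z : 0 <= a < 1 -> a = x + IZR z -> frac_part x = a.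
Proof.
  intros Ha Hx. unfold frac_part. destruct (base_Int_part x) as [H1 H2].
  assert (Int_part x < - z + 1)%Z
    by (apply lt_IZR; rewrite plus_IZR, opp_IZR; simpl; lra).
  assert (- z < Int_part x + 1)%Z
    by (apply lt_IZR; rewrite plus_IZR, opp_IZR; simpl; lra).
  replace (Int_part x) with (- z)%Z by lia. rewrite opp_IZR. lra.
Qed.

Lemma frac_part_range x : 0 <= frac_part x < 1.
Proof. destruct (base_fp x). lra. Qed.

Lemma frac_part_id x : 0 <= x < 1 -> frac_part x = x.
Proof. intros. apply (frac_part_unique _ _ 0); [lra | simpl; ring]. Qed.

Lemma frac_part_sub_frac u v : frac_part (frac_part u - v) = frac_part (u - v).
Proof.
  apply (frac_part_unique _ _ (Int_part u - Int_part (u - v))).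
  - apply frac_part_range.
  - unfold frac_part. rewrite minus_IZR. ring.
Qed.

Section Rotation.

Variable eps : R.
Hypothesis eps_range : 0 < eps < 1.

Lemma T2_rotation x : 0 <= x < 1 -> T2 eps x = frac_part (x - eps).
Proof.
  intros Hx. unfold T2. destruct (Rlt_dec x eps).
  - symmetry; apply (frac_part_unique _ _ 1); simpl; lra.
  - symmetry; apply (frac_part_unique _ _ 0); simpl; lra.
Qed.

Lemma T2inv_rotation x : 0 <= x < 1 -> T2inv eps x = frac_part (x + eps).
Proof.
  intros Hx. unfold T2inv. destruct (Rlt_dec x (1 - eps)).
  - symmetry; apply (frac_part_unique _ _ 0); simpl; lra.
  - symmetry; apply (frac_part_unique _ _ (-1)); simpl; lra.
Qed.

Lemma iterZ_T2 x0 n : 0 <= x0 < 1 ->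
  iterZ (T2 eps) (T2inv eps) n x0 = frac_part (x0 - IZR n * eps).
Proof.
  intros Hx.
  assert (Hiter : forall (f : R -> R) s k,
            (forall x, 0 <= x < 1 -> f x = frac_part (x - s * eps)) ->
            Nat.iter k f x0 = frac_part (x0 - s * INR k * eps)).
  { intros f s k Hf. induction k as [|k IH]; simpl Nat.iter.
    - rewrite Rmult_0_r, Rmult_0_l, Rminus_0_r. now rewrite frac_part_id.
    - rewrite IH, Hf, frac_part_sub_frac, S_INR by apply frac_part_range.
      apply (f_equal frac_part). ring. }
  destruct n as [|p|p]; simpl iterZ.
  - rewrite Rmult_0_l, Rminus_0_r. now rewrite frac_part_id.
  - rewrite (Hiter _ 1) by (intros; rewrite Rmult_1_l; now apply T2_rotation).
    rewrite INR_IZR_INZ, positive_nat_Z. apply (f_equal frac_part). ring.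
  - rewrite (Hiter _ (- 1))
      by (intros x Hx'; rewrite T2inv_rotation by exact Hx';
          apply (f_equal frac_part); ring).
    rewrite INR_IZR_INZ, positive_nat_Z, <- (Pos2Z.opp_pos p), opp_IZR.
    apply (f_equal frac_part). ring.
Qed.

End Rotation.

Definition rot_letter (eps y : R) (i : nat) : bool :=
  if Rlt_dec (frac_part (y - INR i * eps)) eps then false else true.

Definition coded_by (eps : R) (M : nat) (w : list bool) (y : R) : Prop :=
  0 <= y < 1 /\ length w = M /\
  forall i, (i < M)%nat -> nth i w false = rot_letter eps y i.

Lemma LangM_coded_by M eps w : 0 < eps < 1 -> LangM M eps w ->
  exists y, coded_by eps M w y.
Proof.
  intros He [Hlen [x0 [Hx [n Hn]]]].
  exists (frac_part (x0 - IZR n * eps)). split; [apply frac_part_range|]. split; [exact Hlen|].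
  intros i Hi. rewrite Hn by exact Hi. unfold coding2, rot_letter.
  rewrite iterZ_T2, frac_part_sub_frac, plus_IZR, <- INR_IZR_INZ by assumption.
  replace (x0 - (IZR n + INR i) * eps) with (x0 - IZR n * eps - INR i * eps) by ring.
  reflexivity.
Qed.

Section OrbitPoints.

Variable eps : R.
Hypothesis eps_range : 0 < eps < 1.

(* The points {k eps}; the coding of y is governed by the position of y
   among them. *)
Definition orbit_pt (k : nat) : R := frac_part (INR k * eps).

Definition below (y : R) (k : nat) : bool :=
  if Rle_dec (orbit_pt k) y then true else false.

Definition wraps (i : nat) : bool :=
  if Rlt_dec (orbit_pt (S i)) (orbit_pt i) then true else false.

Lemma below_true y k : below y k = true <-> orbit_pt k <= y.
Proof. unfold below. destruct (Rle_dec _ _); split; auto; discriminate. Qed.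

Lemma orbit_pt_0 : orbit_pt 0 = 0.
Proof. unfold orbit_pt. rewrite Rmult_0_l. exact fp_R0. Qed.

Lemma below_0 y : 0 <= y -> below y 0 = true.
Proof. intros. apply below_true. rewrite orbit_pt_0. lra. Qed.

Lemma below_mono y y' k : y <= y' -> below y k = true -> below y' k = true.
Proof. rewrite !below_true. lra. Qed.

(* The i-th letter is 0 iff y lies in [{i eps}, {i eps} + eps) modulo 1,
   which is expressed by the positions of y relative to {i eps} and
   {(i+1) eps} and by whether the step between them wraps. *)
Lemma letter_formula y i : 0 <= y < 1 ->
  rot_letter eps y i =
  if wraps i then andb (negb (below y i)) (below y (S i))
  else orb (negb (below y i)) (below y (S i)).
Proof.
  intros Hy. pose proof (frac_part_range (INR i * eps)) as Hpt.
  assert (Hdiff : frac_part (y - INR i * eps) =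
            if Rle_dec (orbit_pt i) y then y - orbit_pt i else y - orbit_pt i + 1).
  { unfold orbit_pt. pose proof (frac_part_id y Hy) as Hfy.
    destruct (Rle_dec _ _).
    - rewrite Rminus_fp1, Hfy by lra. reflexivity.
    - rewrite Rminus_fp2, Hfy by lra. reflexivity. }
  assert (Hnext : orbit_pt (S i) =
            if Rlt_dec (orbit_pt i + eps) 1 then orbit_pt i + eps
            else orbit_pt i + eps - 1).
  { unfold orbit_pt. rewrite S_INR, Rmult_plus_distr_r, Rmult_1_l.
    pose proof (frac_part_id eps ltac:(lra)) as Hfe.
    destruct (Rlt_dec _ _).
    - rewrite plus_frac_part2, Hfe by lra. reflexivity.
    - rewrite plus_frac_part1, Hfe by lra. reflexivity. }
  unfold rot_letter, wraps, below. rewrite Hdiff, Hnext.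
  destruct (Rlt_dec (orbit_pt i + eps) 1); unfold orbit_pt in *;
  repeat match goal with
  | |- context [Rle_dec ?x ?y] => destruct (Rle_dec x y)
  | |- context [Rlt_dec ?x ?y] => destruct (Rlt_dec x y)
  end; simpl; try reflexivity; lra.
Qed.


(* Since below y is monotone along a non-wrapping step and along a wrapping
   step in opposite directions, the letter is a parity of three bits; this is
   the form in which the two codings of an amicable pair are compared. *)
Lemma letter_parity y i : 0 <= y < 1 ->
  rot_letter eps y i = negb (xorb (xorb (below y i) (below y (S i))) (wraps i)).
Proof.
  intros Hy. rewrite letter_formula by exact Hy. unfold wraps.
  destruct (Rlt_dec (orbit_pt (S i)) (orbit_pt i)) as [Hw|Hw];
    destruct (below y i) eqn:Hi, (below y (S i)) eqn:Hs; try reflexivity; exfalso.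
  - (* wrapping step: orbit_pt (S i) < orbit_pt i <= y *)
    apply below_true in Hi. assert (below y (S i) = true) by (apply below_true; lra).
    congruence.
  - (* non-wrapping step: orbit_pt i <= orbit_pt (S i) <= y *)
    apply below_true in Hs. assert (below y i = true) by (apply below_true; lra).
    congruence.
Qed.

Definition rank (M : nat) (y : R) : nat := count_lt (below y) (S M).

Lemma rank_determines_word M w w' y y' :
  coded_by eps M w y -> coded_by eps M w' y' -> rank M y = rank M y' -> w = w'.
Proof.
  intros [Hy [Hlen Hw]] [Hy' [Hlen' Hw']] Hrank.
  assert (Hsame : forall k, (k < S M)%nat -> below y k = below y' k).
  { destruct (Rle_dec y y') as [Hle|Hgt].
    - apply count_lt_eq; [|exact Hrank]. intros k _; apply below_mono; lra.
    - intros k Hk. symmetry. revert k Hk. apply count_lt_eq; [|symmetry; exact Hrank].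
      intros k _; apply below_mono; lra. }
  apply nth_ext with false false; [congruence|].
  intros i Hi. rewrite Hlen in Hi. rewrite Hw, Hw', !letter_formula by assumption.
  rewrite (Hsame i), (Hsame (S i)) by lia. reflexivity.
Qed.


Section AmicablePair.

Variables (M b : nat) (w1 w2 : list bool) (y1 y2 : R).
Hypotheses (coded1 : coded_by eps M w1 y1) (coded2 : coded_by eps M w2 y2)
           (amic : amicable b w1 w2).

Let between (k : nat) : bool := xorb (below y1 k) (below y2 k).

(* By letter_parity, the disagreements of w1 and w2 are the increments of
   between, so the combinatorial lemma on sigma01/sigma10 applies to it. *)
Lemma amicable_between :
  between M = false /\ count_lt between (S M) = b /\
  (forall p, (p < M)%nat -> between (S p) = true ->
     between p = false /\ rot_letter eps y1 p = false).
Proof.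
  destruct coded1 as [Hy1 [Hlen1 Hw1]], coded2 as [Hy2 [Hlen2 Hw2]].
  destruct amic as [w [_ [HB [-> ->]]]].
  assert (Hu : length (flat_map sigma01 w) = M) by exact Hlen1.
  destruct (sigma_disagreement_marks w between) as [Hend [Hcount Hmark]].
  - unfold between. rewrite !below_0 by lra. reflexivity.
  - intros i Hi. rewrite Hu in Hi. rewrite Hw1, Hw2, !letter_parity by assumption.
    unfold between.
    destruct (below y1 i), (below y1 (S i)), (below y2 i), (below y2 (S i)), (wraps i);
      reflexivity.
  - rewrite Hu in Hend, Hcount, Hmark. rewrite HB in Hcount.
    split; [exact Hend|]. split; [exact Hcount|].
    intros p Hp Hbet. rewrite <- Hw1 by exact Hp. exact (Hmark p Hp Hbet).
Qed.

(* The first word of an amicable pair is read from the lower point: a first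
   separating point {(p+1) eps} is reached by a wrapping step from a point
   {p eps} below both y1 and y2, which is impossible if y2 < y1. *)
Lemma amicable_ordered : (1 <= b)%nat -> y1 <= y2.
Proof.
  intros Hb. destruct coded1 as [Hy1 _], coded2 as [Hy2 _].
  destruct amicable_between as [_ [Hcount Hmark]].
  destruct (Rle_dec y1 y2) as [Hle|Hgt]; [exact Hle|exfalso].
  destruct (count_lt_pos between (S M)) as [[|p] [Hp Hbet]]; [rewrite Hcount; exact Hb| |].
  { unfold between in Hbet. rewrite !below_0 in Hbet by lra. discriminate. }
  destruct (Hmark p ltac:(lia) Hbet) as [Hbet_p Hletter].
  rewrite letter_formula in Hletter by exact Hy1.
  assert (mono : forall j, below y2 j = true -> below y1 j = true)
    by (intros j; apply below_mono; lra).
  unfold between in Hbet, Hbet_p.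
  destruct (below y2 (S p)) eqn:S2.
  { rewrite (mono _ S2) in Hbet. discriminate. }
  destruct (below y1 (S p)) eqn:S1; [|discriminate].
  destruct (wraps p) eqn:Wp; [|destruct (below y1 p); discriminate].
  destruct (below y1 p) eqn:P1; [|discriminate].
  destruct (below y2 p) eqn:P2; [|discriminate].
  apply below_true in P2. unfold wraps in Wp.
  destruct (Rlt_dec (orbit_pt (S p)) (orbit_pt p)); [|discriminate].
  assert (below y2 (S p) = true) by (apply below_true; lra). congruence.
Qed.

(* Hence the ranks differ by exactly b, and the point {M eps} does not lie
   between y1 and y2, which forbids b consecutive values of rank M y1. *)
Lemma amicable_rank_gap : (1 <= b)%nat ->
  rank M y2 = (rank M y1 + b)%nat /\
  (rank M (orbit_pt M) <= rank M y1 \/ rank M y1 + b + 1 <= rank M (orbit_pt M))%nat.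
Proof.
  intros Hb. pose proof (amicable_ordered Hb) as Hle.
  destruct amicable_between as [Hend [Hcount _]].
  assert (Hincl : forall k, (k < S M)%nat -> below y1 k = true -> below y2 k = true)
    by (intros k _; apply below_mono; lra).
  assert (Hrank : rank M y2 = (rank M y1 + b)%nat)
    by (unfold rank; rewrite <- Hcount; exact (count_lt_split _ _ _ Hincl)).
  split; [exact Hrank|].
  unfold between in Hend. unfold rank in *.
  destruct (below y1 M) eqn:B1M.
  - left. apply count_lt_mono. intros k _ Hk.
    apply below_true in Hk. apply below_true in B1M. apply below_true. lra.
  - right. destruct (below y2 M) eqn:B2M; [discriminate|].
    rewrite <- Hrank. simpl. rewrite B2M.
    assert (HM : below (orbit_pt M) M = true) by (apply below_true; lra). rewrite HM.
    assert (count_lt (below y2) M <= count_lt (below (orbit_pt M)) M)%nat; [|lia].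
    apply count_lt_mono. intros k _ Hk. apply below_true in Hk. apply below_true.
    assert (~ orbit_pt M <= y2) by (intros H; apply below_true in H; congruence). lra.
Qed.

End AmicablePair.

End OrbitPoints.

(* A rank counts at least the point {0 eps} = 0. *)
Lemma rank_range eps M y : 0 <= y -> (1 <= rank eps M y <= S M)%nat.
Proof.
  intros Hy. split; [|apply count_lt_le].
  apply (count_lt_pos_of _ _ 0); [lia|]. now apply below_0.
Qed.

(* {M eps} is above {0 eps} = 0 and itself. *)
Lemma rank_last_point eps M : (1 <= M)%nat -> (2 <= rank eps M (orbit_pt eps M))%nat.
Proof.
  intros HM. unfold rank. simpl.
  assert (below eps (orbit_pt eps M) M = true) as -> by (apply below_true; lra).
  assert (1 <= count_lt (below eps (orbit_pt eps M)) M)%nat; [|lia].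
  apply (count_lt_pos_of _ _ 0); [lia|]. apply below_0, frac_part_range.
Qed.

(* Removing one well-chosen value from 1..M+1-b leaves at most M-b values and
   keeps every r with r+b <= M+1 outside the forbidden window q-b <= r < q. *)
Lemma admissible_ranks q b M : (2 <= q <= S M)%nat -> (1 <= b <= M)%nat ->
  exists ranks, (length ranks <= M - b)%nat /\
    forall r, (1 <= r)%nat -> (r + b <= S M)%nat -> (q <= r \/ r + b + 1 <= q)%nat ->
      In r ranks.
Proof.
  intros Hq Hb. set (v := Nat.max 1 (q - b)).
  assert (Hv : In v (seq 1 (M + 1 - b))) by (apply in_seq; unfold v; lia).
  exists (remove Nat.eq_dec v (seq 1 (M + 1 - b))). split.
  - pose proof (remove_length_lt Nat.eq_dec _ _ Hv) as Hlt.
    rewrite length_seq in Hlt. lia.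
  - intros r Hr1 Hrb Hwin. apply in_in_remove; [unfold v; lia|]. apply in_seq. lia.
Qed.

Definition ranked_pair (eps : R) (M b : nat) (p : list bool * list bool) (r : nat) : Prop :=
  exists y1 y2, coded_by eps M (fst p) y1 /\ coded_by eps M (snd p) y2 /\
    rank eps M y1 = r /\ rank eps M y2 = (r + b)%nat.

(* Each admissible rank r carries at most one pair, and every amicable pair
   of factors of length M carries an admissible rank: at most M - b pairs. *)
Theorem mainTheorem6 (eps : R) (b M : nat) :
  irrational eps -> 0 < eps < 1 ->
  (1 <= b)%nat -> (2 * b <= M)%nat ->
  forall ps : list (list bool * list bool),
    NoDup ps ->
    (forall p, In p ps ->
       LangM M eps (fst p) /\ LangM M eps (snd p) /\ amicable b (fst p) (snd p)) ->
    (length ps <= M - b)%nat.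
Proof.
  intros _ He Hb HM ps Hnodup Hps.
  pose proof (rank_last_point eps M ltac:(lia)) as Hq2.
  pose proof (rank_range eps M (orbit_pt eps M) ltac:(apply frac_part_range)) as Hq.
  destruct (admissible_ranks (rank eps M (orbit_pt eps M)) b M ltac:(lia) ltac:(lia))
    as [ranks [Hranks Hin_ranks]].
  enough (length ps <= length ranks)%nat by lia.
  apply (relational_pigeonhole (ranked_pair eps M b)); [exact Hnodup| |].
  - intros [u1 u2] [u1' u2'] r _ _ [y1 [y2 [C1 [C2 [R1 R2]]]]]
      [y1' [y2' [C1' [C2' [R1' R2']]]]].
    cbn [fst snd] in *. f_equal.
    + apply (rank_determines_word eps He M u1 u1' y1 y1'); congruence.
    + apply (rank_determines_word eps He M u2 u2' y2 y2'); congruence.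
  - intros p Hp. destruct (Hps p Hp) as [L1 [L2 Ham]].
    destruct (LangM_coded_by _ _ _ He L1) as [y1 C1].
    destruct (LangM_coded_by _ _ _ He L2) as [y2 C2].
    destruct (amicable_rank_gap eps He M b _ _ y1 y2 C1 C2 Ham Hb) as [Hgap Hwin].
    pose proof (rank_range eps M y2 ltac:(apply (proj1 C2))) as Hy2.
    exists (rank eps M y1). split; [|exists y1, y2; auto].
    apply Hin_ranks; [apply rank_range, (proj1 C1) | lia | exact Hwin].
Qed.
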